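(* Let $\varepsilon\in(0,1)$ and let $\mu=\mu(n)$ be sub-exponential in $n$ (i.e. $\mu=e^{o(n)}$). Let $P_0$ be a population of $\mu$ independent uniformly random points of $\{0,1\}^n$ and $Z_0:=\max\{0,\tau^{n-f_0}-g(P_0)\}$. Then for $n$ sufficiently large, \[E[Z_0]\ge\tfrac12\,\tau^{n-f_0}.\]
   Context: $f$ is OneMax, $f(x)=\sum_i x_i$. Potential: $\tau=\frac{4e}{\varepsilon}$, $\alpha=1-\frac1\tau\ln\big(1+\frac1\tau\big)$, $f_0=\lceil\alpha n\rceil$, $g(x)=\tau^{f(x)-f_0}$ if $f(x)\ge f_0$ and $g(x)=0$ otherwise; for a population (multiset) $P$, $g(P)=\sum_{x\in P}g(x)$. *)

From Stdlib Require Import Reals.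
From mathcomp Require Import all_boot.

Set Implicit Arguments.
Unset Strict Implicit.
Unset Printing Implicit Defensive.

Local Open Scope R_scope.

Definition tau (eps : R) : R := 4 * exp 1 / eps.

Definition alpha (eps : R) : R := 1 - / tau eps * ln (1 + / tau eps).

(* floor via Stdlib's [up] (x < up x <= x + 1), ceiling = - floor (- x) *)
Definition Rfloor (x : R) : Z := (up x - 1)%Z.
Definition Rceil (x : R) : Z := (- Rfloor (- x))%Z.

Definition f0 (eps : R) (n : nat) : nat := Z.to_nat (Rceil (alpha eps * INR n)).

Definition bits (n : nat) := {ffun 'I_n -> bool}.

Definition onemax (n : nat) (x : bits n) : nat := (\sum_(i < n) nat_of_bool (x i))%N.

Definition gval (eps : R) {n : nat} (x : bits n) : R :=
  if (f0 eps n <= onemax x)%N then tau eps ^ (onemax x - f0 eps n) else 0.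

(* populations of size mu: mu-tuples of bit strings (multisets with order) *)
Definition pop (n mu : nat) := {ffun 'I_mu -> bits n}.

Definition gpop (eps : R) (n mu : nat) (P : pop n mu) : R :=
  \big[Rplus/0]_(i < mu) gval eps (P i).

Definition Z0 (eps : R) (n mu : nat) (P : pop n mu) : R :=
  Rmax 0 (tau eps ^ (n - f0 eps n) - gpop eps P).

(* Expectation of Z_0 when P_0 consists of mu independent uniform points:
   uniform average over all mu-tuples of points of {0,1}^n. *)
Definition EZ0 (eps : R) (n mu : nat) : R :=
  (\big[Rplus/0]_(P : pop n mu) Z0 eps P) / INR #|{: pop n mu}|.

From Pilot Require Import Defs.
From HB Require Import structures.
From Stdlib Require Import Reals Lra.
From mathcomp Require Import all_boot zify.

Local Open Scope R_scope.

(* Since Z_0 >= tau^(n-f_0) - g(P_0) and the mu points are independent and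
   uniform, E[Z_0] >= tau^(n-f_0) - mu E[g(x)] for one uniform point x.
   Bounding g(x) <= tau^(n-f_0) tau^(|x|_1 - n) and computing
   E[tau^(|x|_1)] = ((tau+1)/2)^n coordinatewise gives
   E[Z_0] >= tau^(n-f_0) (1 - mu c^n) with c = (tau+1)/(2 tau) < 9/16,
   because tau > 8.  A sub-exponential mu is eventually below (4/3)^n, and
   (4/3 c)^n <= (3/4)^n <= 1/2 for n >= 3. *)

HB.instance Definition _ := Monoid.isComLaw.Build R 0 Rplus
  (fun x y z => esym (Rplus_assoc x y z)) Rplus_comm Rplus_0_l.
HB.instance Definition _ := Monoid.isComLaw.Build R 1 Rmult
  (fun x y z => esym (Rmult_assoc x y z)) Rmult_comm Rmult_1_l.
HB.instance Definition _ := Monoid.isMulLaw.Build R 0 Rmult Rmult_0_l Rmult_0_r.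
HB.instance Definition _ :=
  Monoid.isAddLaw.Build R Rmult Rplus Rmult_plus_distr_r Rmult_plus_distr_l.

Lemma big_Rplus_const (A : finType) (c : R) :
  \big[Rplus/0]_(x : A) c = INR #|A| * c.
Proof. by rewrite big_const; elim: #|A| => [|k IH]; rewrite ?S_INR /= ?IH; ring. Qed.

Lemma big_Rmult_const (A : finType) (c : R) : \big[Rmult/1]_(x : A) c = c ^ #|A|.
Proof. by rewrite big_const; elim: #|A| => //= k ->; ring. Qed.

Lemma big_Rplus_le (I : Type) (r : seq I) (P : pred I) (F G : I -> R) :
  (forall i, P i -> F i <= G i) ->
  \big[Rplus/0]_(i <- r | P i) F i <= \big[Rplus/0]_(i <- r | P i) G i.
Proof. by move=> FG; elim/big_ind2: _ => // *; lra. Qed.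

Lemma big_Ropp (A : finType) (F : A -> R) :
  \big[Rplus/0]_(x : A) - F x = - \big[Rplus/0]_(x : A) F x.
Proof. by rewrite (big_morph Ropp Ropp_plus_distr Ropp_0). Qed.

Lemma INR_expn (m n : nat) : INR (m ^ n) = INR m ^ n.
Proof. by elim: n => [|n IH] //; rewrite expnS -multE mult_INR IH. Qed.

Definition uavg {A : finType} (F : A -> R) : R :=
  \big[Rplus/0]_(x : A) F x / INR #|A|.

Section UniformAverage.

Context {A : finType}.
Implicit Types (F G : A -> R) (c : R).

Lemma uavg_le F G : (forall x, F x <= G x) -> uavg F <= uavg G.
Proof.
move=> FG; apply: Rmult_le_compat_r; last by apply: big_Rplus_le.
by case: #|A| => [|k]; [rewrite Rinv_0; lra | apply/Rlt_le/Rinv_pos/lt_0_INR; lia].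
Qed.

Lemma uavgZ c F : uavg (fun x => c * F x) = c * uavg F.
Proof. by rewrite /uavg -big_distrr /= /Rdiv; ring. Qed.

Lemma uavgB F G : uavg (fun x => F x - G x) = uavg F - uavg G.
Proof. by rewrite /uavg big_split /= big_Ropp /Rdiv; ring. Qed.

Lemma uavg_const c : (0 < #|A|)%N -> uavg (fun _ : A => c) = c.
Proof.
move=> A_gt0; have : 0 < INR #|A| by apply: lt_0_INR; lia.
by rewrite /uavg big_Rplus_const => ?; field; lra.
Qed.

Lemma uavg_sum (m : nat) (F : 'I_m -> A -> R) :
  uavg (fun x => \big[Rplus/0]_(i < m) F i x) = \big[Rplus/0]_(i < m) uavg (F i).
Proof. by rewrite /uavg exchange_big /Rdiv big_distrl. Qed.

End UniformAverage.

Lemma uavg_ffun_prod {I J : finType} (F : I -> J -> R) :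
  uavg (fun x : {ffun I -> J} => \big[Rmult/1]_(i : I) F i (x i)) =
  \big[Rmult/1]_(i : I) uavg (F i).
Proof.
rewrite /uavg -bigA_distr_bigA big_split /= big_Rmult_const card_ffun INR_expn.
by rewrite pow_inv.
Qed.

Lemma uavg_ffun_eval {I J : finType} (i : I) (h : J -> R) :
  (0 < #|J|)%N -> uavg (fun x : {ffun I -> J} => h (x i)) = uavg h.
Proof.
move=> J_gt0; pose F k := if k == i then h else fun _ : J => 1.
have -> : uavg (fun x : {ffun I -> J} => h (x i)) =
          uavg (fun x : {ffun I -> J} => \big[Rmult/1]_(k : I) F k (x k)).
  rewrite /uavg; congr (_ / _); apply: eq_bigr => x _.
  rewrite (bigD1 i) //= big1 /F ?eqxx; first ring.
  by move=> k /negbTE ->.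
rewrite uavg_ffun_prod (bigD1 i) //= big1 /F ?eqxx; first ring.
by move=> k /negbTE ->; apply: uavg_const.
Qed.

Lemma uavg_pow_onemax (t : R) (n : nat) :
  uavg (fun x : bits n => t ^ onemax x) = ((t + 1) / 2) ^ n.
Proof.
have -> : uavg (fun x : bits n => t ^ onemax x) =
          uavg (fun x : bits n => \big[Rmult/1]_(i < n) t ^ x i).
  rewrite /uavg; congr (_ / _); apply: eq_bigr => x _.
  by apply: (big_morph (pow t)) => // a b; apply: pow_add.
rewrite (uavg_ffun_prod (fun (_ : 'I_n) (b : bool) => t ^ b)).
rewrite big_Rmult_const card_ord; f_equal.
by rewrite /uavg big_bool card_bool /= Rmult_1_r; lra.
Qed.

Lemma onemax_le {n} (x : bits n) : (onemax x <= n)%N.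
Proof.
rewrite /onemax -[leqRHS]card_ord -sum1_card.
by apply: leq_sum => i _; apply: leq_b1.
Qed.

Lemma gval_le_pow eps n (x : bits n) : 0 < tau eps ->
  gval eps x <= tau eps ^ (n - f0 eps n) / tau eps ^ n * tau eps ^ onemax x.
Proof.
move=> tau_gt0; have tau_n_gt0 := pow_lt _ n tau_gt0.
rewrite /gval; case: ifP => f0_le.
  have E : tau eps ^ (n - f0 eps n) * tau eps ^ onemax x =
           tau eps ^ (onemax x - f0 eps n) * tau eps ^ n.
    by have := onemax_le x; rewrite -!pow_add => ?; f_equal; lia.
  by apply: Req_le; rewrite /Rdiv Rmult_assoc (Rmult_comm (/ _)) -Rmult_assoc E; field; lra.
apply: Rmult_le_pos; last by apply: pow_le; lra.
by apply: Rle_mult_inv_pos => //; apply: pow_le; lra.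
Qed.

Lemma EZ0_uavg eps n mu : EZ0 eps n mu = uavg (@Defs.Z0 eps n mu).
Proof. by []. Qed.

Lemma EZ0_ge eps n mu : 0 < tau eps ->
  EZ0 eps n mu >=
  tau eps ^ (n - f0 eps n) * (1 - INR mu * ((tau eps + 1) / (2 * tau eps)) ^ n).
Proof.
move=> tau_gt0; set t := tau eps in tau_gt0 *; set T := t ^ (n - f0 eps n).
have bits_gt0 : (0 < #|bits n|)%N by apply/card_gt0P; exists [ffun=> false].
have pop_gt0 : (0 < #|pop n mu|)%N by apply/card_gt0P; exists [ffun=> [ffun=> false]].
have Z0_ge : T - uavg (@gpop eps n mu) <= EZ0 eps n mu.
  rewrite EZ0_uavg -(uavg_const T pop_gt0) -uavgB.
  by apply: uavg_le => P; apply: Rmax_r.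
have gpop_avg : uavg (@gpop eps n mu) = INR mu * uavg (@gval eps n).
  rewrite /gpop uavg_sum.
  under eq_bigr do rewrite uavg_ffun_eval //.
  by rewrite big_Rplus_const card_ord.
have gval_avg : uavg (@gval eps n) <= T / t ^ n * ((t + 1) / 2) ^ n.
  rewrite -uavg_pow_onemax -uavgZ; apply: uavg_le => x; exact: gval_le_pow.
have tn_gt0 : 0 < t ^ n by apply: pow_lt.
have mu_gval_le := Rmult_le_compat_l _ _ _ (pos_INR mu) gval_avg.
have pow_ratio (s : R) : ((s + 1) / (2 * s)) ^ n = ((s + 1) / 2) ^ n / s ^ n.
  by rewrite /Rdiv Rinv_mult !Rpow_mult_distr !pow_inv; ring.
rewrite pow_ratio.
have -> : T * (1 - INR mu * (((t + 1) / 2) ^ n / t ^ n)) =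
          T - INR mu * (T / t ^ n * ((t + 1) / 2) ^ n) by field; lra.
lra.
Qed.

Lemma tau_gt8 {eps} : 0 < eps < 1 -> 8 < tau eps.
Proof.
move=> eps01; have e_gt2 : 2 < exp 1 by have := exp_ineq1 1; lra.
have : tau eps * eps = 4 * exp 1 by rewrite /tau; field; lra.
nra.
Qed.

Lemma subexponential_le_pow (mu : nat -> nat) (b : R) : 1 < b ->
  (forall d : R, 0 < d ->
     exists N : nat, forall n : nat, (N <= n)%N -> INR (mu n) <= exp (d * INR n)) ->
  exists N : nat, forall n : nat, (N <= n)%N -> INR (mu n) <= b ^ n.
Proof.
move=> b_gt1 mu_subexp.
have [|N le_mu] := mu_subexp (ln b); first by rewrite -ln_1; apply: ln_increasing; lra.
exists N => n /le_mu; rewrite -[b ^ n]exp_ln; last by apply: pow_lt; lra.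
by rewrite ln_pow; [rewrite Rmult_comm | lra].
Qed.

Lemma pow_three_quarters_le_half {n} : (3 <= n)%N -> (3 / 4) ^ n <= / 2.
Proof.
move=> /subnKC <-; rewrite pow_add.
have : (3 / 4) ^ (n - 3) <= 1 by rewrite -(pow1 (n - 3)); apply: pow_incr; lra.
have := pow_le (3 / 4) (n - 3); rewrite /=; nra.
Qed.

Theorem lemma4 (eps : R) (mu : nat -> nat)
  (Heps : 0 < eps < 1)
  (Hmu : forall d : R, 0 < d ->
           exists N : nat, forall n : nat, (N <= n)%N -> INR (mu n) <= exp (d * INR n)) :
  exists N : nat, forall n : nat, (N <= n)%N ->
    EZ0 eps n (mu n) >= / 2 * tau eps ^ (n - f0 eps n).
Proof.
have tau_gt8 := tau_gt8 Heps.
have [N mu_le] := subexponential_le_pow mu (4 / 3) ltac:(lra) Hmu.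
exists (maxn N 3) => n; rewrite geq_max => /andP [/mu_le mu_n_le n_ge3].
set c := (tau eps + 1) / (2 * tau eps).
have c_pos : 0 < c by apply: Rdiv_lt_0_compat; lra.
have c_le : 4 / 3 * c <= 3 / 4.
  apply: (Rmult_le_reg_r (2 * tau eps)); first lra.
  by rewrite /c; field_simplify; lra.
have mu_c_le : INR (mu n) * c ^ n <= / 2.
  apply: Rle_trans (pow_three_quarters_le_half n_ge3).
  apply: Rle_trans (_ : (4 / 3) ^ n * c ^ n <= _).
    by apply: Rmult_le_compat_r => //; apply: pow_le; lra.
  by rewrite -Rpow_mult_distr; apply: pow_incr; lra.
have T_ge0 : 0 <= tau eps ^ (n - f0 eps n) by apply: pow_le; lra.
apply: Rge_trans (EZ0_ge eps n (mu n) ltac:(lra)) _; rewrite -/c; apply: Rle_ge.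
rewrite Rmult_comm; apply: Rmult_le_compat_l => //; lra.
Qed.
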